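(* Let $S=\langle S^G,S^\Delta\rangle$ be a triplestore schema and let $r: A\rightarrow C$ be a rule (both as defined in the context). Then the schemas $\mathtt{score}(S,r)$ and $\mathtt{critical}(S,r)$ are semantically equivalent, i.e. $\mathbb{I}(\mathtt{score}(S,r))=\mathbb{I}(\mathtt{critical}(S,r))$.
   Context: **RDF basics.** $\mathbb{U}$ (URIs), $\mathbb{L}$ (literals) and $\mathbb{V}$ (variables) are pairwise disjoint infinite sets; constants are elements of $\mathbb{U}\cup\mathbb{L}$. - A triple is an element of $\mathbb{U}\times\mathbb{U}\times(\mathbb{U}\cup\mathbb{L})$, and a graph is a finite set of triples. - A triple pattern is an element of $(\mathbb{U}\cup\mathbb{V})\times(\mathbb{U}\cup\mathbb{V})\times(\mathbb{U}\cup\mathbb{L}\cup\mathbb{V})$, and a graph pattern is a finite set of triple patterns. For a triple (pattern) $t$ and $i\in\tau=\{1,2,3\}$, $t[i]$ is its $i$-th element (subject, predicate, object). $vars(P)$ and $const(P)$ denote the variables and constants occurring in $P$. - A mapping is a partial function $m:\mathbb{V}\rightharpoonup\mathbb{U}\cup\mathbb{L}$ with domain $dom(m)$. For a pattern $p$, $m(p)$ replaces each $?v\in dom(m)$ by $m(?v)$ and leaves other variables unchanged. - For a graph pattern $P$ and graph $G$, $[\![P]\!]_G$ is the set of mappings $m$ with $dom(m)=vars(P)$ and $m(P)\subseteq G$. **Rules.** A rule $r:A\rightarrow C$ consists of graph patterns $A$ (antecedent) and $C$ (consequent) with $vars(C)\subseteq vars(A)$, where each variable occurs at most once in $C$. **Schemas.**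 A triplestore schema is a pair $S=\langle S^G,S^\Delta\rangle$ where: - $S^G$ is a finite set of triple patterns in which each variable occurs at most once (across and within triples); - $S^\Delta\subseteq vars(S^G)$ (the no-literal set) contains every variable occurring in subject or predicate position in $S^G$. A triple pattern $t^S$ models a triple $t$ (w.r.t. $S^\Delta$) if there is a mapping $\mu$ with $\mu(t^S)=t$ that binds no variable of $S^\Delta$ to a literal. The same definition is used when $t$ contains the special URI $\lambda$ below. A graph $I$ is an instance of $S$ if every triple of $I$ is modelled by some $t^S\in S^G$. $\mathbb{I}(S)$ denotes the set of instances of $S$. **Canonical graphs.** Fix a fresh URI $\lambda$ not occurring in $S^G$, $A$ or $C$, and let $K=const(S^G)\cup const(A)\cup\{\lambda\}$. - The sandbox graph $\mathbb{S}(S)$ consists of, for each $t^S\in S^G$, the triple obtained by replacing every variable in $t^S$ by $\lambda$. - The critical instance $\mathbb{C}(S,r)$ is the set of all triples $t$ such that, for some $t^S\in S^G$ and every $i\in\tau$, the following holds. If $t^S[i]$ is a constant, then $t[i]=t^S[i]$. If $t^S[i]$ is a variable, then $t[i]=c$ for some $c\in K$ such that either $c$ is a URI, or ($i=3$ and $t^S[3]\notin S^\Delta$). **Rewriting.** For a triple pattern $t$, its rewritings are the (up to 8) triple patterns $t'$ with $t'[i]\in\{t[i],\lambda\}$ for each $i$. $\mathbb{Q}(A)$ is the set of graph patterns obtained by choosing one rewriting of each $t\in A$. $[\![\mathbb{Q}(A)]\!]_G$ is the set of mappings $m$ with $dom(m)=vars(A)$ such that $m(q)\subseteq G$ for some $q\in\mathbb{Q}(A)$.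 **Common post-processing.** Given a canonical graph $G$ and a candidate mapping set $M$, define the output schema $S'$ as follows. Initialise $S'^G=S^G$ and $S'^\Delta=S^\Delta$. Then, for each $m\in M$: 1. Let $\Delta^m$ be the set of variables occurring in subject or predicate position in some triple of $A$ or $C$. 2. For each $t_A\in A$, let $R(t_A)$ be the set of ''admissible rewritings'' $t_q$ of $t_A$ with $m(t_q)\in G$. Let $T(t_A)$ be the set of $t^S\in S^G$ that model $m(t_q)$ for some $t_q\in R(t_A)$. - (a) If $t_A[3]$ is a literal $l$, or a variable with $m(t_A[3])=l\in\mathbb{L}$, and no $t^S\in T(t_A)$ has $t^S[3]=l$ or $t^S[3]\in vars(S^G)\setminus S^\Delta$, then discard $m$. - (b) If $t_A[3]$ is a variable with $m(t_A[3])=\lambda$ and no $t^S\in T(t_A)$ has $t^S[3]\in vars(S^G)\setminus S^\Delta$, then add $t_A[3]$ to $\Delta^m$. 3. Discard $m$ if it binds some variable of $\Delta^m$ to a literal. 4. If $m$ is not discarded, let $s^m$ be the substitution that maps each $?v$ with $m(?v)\neq\lambda$ to $m(?v)$, and each $?v$ with $m(?v)=\lambda$ to a fresh variable $?v^*$ (new for each $m$ and not used elsewhere). Add $s^m(C)$ to $S'^G$, and add $s^m(\Delta^m)\cap vars(S'^G)$ to $S'^\Delta$. **The two schemas.** - $\mathtt{score}(S,r)$ is the output $S'$ with $G=\mathbb{S}(S)$, $M=[\![\mathbb{Q}(A)]\!]_{\mathbb{S}(S)}$, and admissible rewritings of $t_A$ being all its rewritings. - $\mathtt{critical}(S,r)$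 is the output $S'$ with $G=\mathbb{C}(S,r)$, $M=[\![A]\!]_{\mathbb{C}(S,r)}$, and $t_A$ as the only admissible rewriting of $t_A$. *)

From Stdlib Require Import List.
Import ListNotations.

Set Implicit Arguments.

Section RDF.

(* U = URIs, L = literals, V = variables (pairwise disjoint by construction) *)
Context {U L V : Type}.

Inductive term : Type :=
| TU : U -> term
| TL : L -> term
| TV : V -> term.

Record tp : Type := TP { t1 : term; t2 : term; t3 : term }.

Definition is_const (x : term) : Prop :=
  match x with TV _ => False | _ => True end.
Definition is_uri (x : term) : Prop :=
  match x with TU _ => True | _ => False end.
Definition is_lit (x : term) : Prop :=
  match x with TL _ => True | _ => False end.
Definition is_uri_or_var (x : term) : Prop :=
  match x with TL _ => False | _ => True end.

Definition wf_triple (t : tp) : Prop :=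
  is_uri (t1 t) /\ is_uri (t2 t) /\ is_const (t3 t).
Definition wf_pattern (t : tp) : Prop :=
  is_uri_or_var (t1 t) /\ is_uri_or_var (t2 t).

(* graphs and graph patterns are finite sets, represented by lists *)
Definition is_graph (G : list tp) : Prop := Forall wf_triple G.
Definition is_graph_pattern (P : list tp) : Prop := Forall wf_pattern P.

Definition occurs_in_tp (x : term) (t : tp) : Prop :=
  t1 t = x \/ t2 t = x \/ t3 t = x.

Definition in_vars (v : V) (P : list tp) : Prop :=
  exists t, In t P /\ occurs_in_tp (TV v) t.
Definition in_consts (c : term) (P : list tp) : Prop :=
  is_const c /\ exists t, In t P /\ occurs_in_tp c t.

Definition in_sp_vars (v : V) (P : list tp) : Prop :=
  exists t, In t P /\ (t1 t = TV v \/ t2 t = TV v).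

Definition comp (t : tp) (i : nat) : term :=
  match i with 1 => t1 t | 2 => t2 t | _ => t3 t end.
Definition vars_at_most_once (P : list tp) : Prop :=
  forall v t t' i i',
    In t P -> In t' P -> In i [1;2;3] -> In i' [1;2;3] ->
    comp t i = TV v -> comp t' i' = TV v -> t = t' /\ i = i'.

Definition mapping := V -> option term.
Definition is_mapping (m : mapping) : Prop :=
  forall v c, m v = Some c -> is_const c.
Definition in_dom (m : mapping) (v : V) : Prop := m v <> None.

Definition app_term (m : mapping) (x : term) : term :=
  match x with
  | TV v => match m v with Some c => c | None => TV v end
  | _ => x
  end.
Definition app_tp (m : mapping) (t : tp) : tp :=
  TP (app_term m (t1 t)) (app_term m (t2 t)) (app_term m (t3 t)).

(* [[P]]_G for a graph given as a set (predicate) of triples *)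
Definition eval (P : list tp) (G : tp -> Prop) (m : mapping) : Prop :=
  is_mapping m /\ (forall v, in_dom m v <-> in_vars v P) /\
  (forall t, In t P -> G (app_tp m t)).

Definition wf_rule (A C : list tp) : Prop :=
  is_graph_pattern A /\ is_graph_pattern C /\
  (forall v, in_vars v C -> in_vars v A) /\ vars_at_most_once C.

(* triplestore schemas <S^G, S^Delta> (input form: S^G finite list) *)
Definition wf_schema (SG : list tp) (SD : V -> Prop) : Prop :=
  is_graph_pattern SG /\ vars_at_most_once SG /\
  (forall v, SD v -> in_vars v SG) /\
  (forall v, in_sp_vars v SG -> SD v).

Definition models (SD : V -> Prop) (tS t : tp) : Prop :=
  exists mu : mapping, is_mapping mu /\ app_tp mu tS = t /\
    (forall v c, mu v = Some c -> SD v -> ~ is_lit c).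

(* instances of a (possibly infinite, predicate-given) schema *)
Definition instance (SG : tp -> Prop) (SD : V -> Prop) (I : list tp) : Prop :=
  is_graph I /\ forall t, In t I -> exists tS, SG tS /\ models SD tS t.

Section Canonical.
Variables (SG : list tp) (SD : V -> Prop) (A C : list tp) (lam : U).

Definition inK (c : term) : Prop :=
  c = TU lam \/ in_consts c SG \/ in_consts c A.

Definition lamify_term (x : term) : term :=
  match x with TV _ => TU lam | _ => x end.

Definition sandbox (t : tp) : Prop :=
  exists tS, In tS SG /\
    t = TP (lamify_term (t1 tS)) (lamify_term (t2 tS)) (lamify_term (t3 tS)).

(* condition on position i of the critical instance; [obj] says i = 3 *)
Definition crit_comp (obj : Prop) (x y : term) : Prop :=
  (is_const x /\ y = x) \/
  (exists v, x = TV v /\ inK y /\ (is_uri y \/ (obj /\ ~ SD v))).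

Definition critical_instance (t : tp) : Prop :=
  exists tS, In tS SG /\ crit_comp False (t1 tS) (t1 t) /\
    crit_comp False (t2 tS) (t2 t) /\ crit_comp True (t3 tS) (t3 t).

Definition rewrite_comp (x y : term) : Prop := y = x \/ y = TU lam.
Definition rewriting (t t' : tp) : Prop :=
  rewrite_comp (t1 t) (t1 t') /\ rewrite_comp (t2 t) (t2 t') /\
  rewrite_comp (t3 t) (t3 t').

(* [[Q(A)]]_G : q ranges over Q(A), one rewriting chosen for each t in A *)
Definition evalQ (G : tp -> Prop) (m : mapping) : Prop :=
  is_mapping m /\ (forall v, in_dom m v <-> in_vars v A) /\
  exists q, Forall2 rewriting A q /\ (forall t, In t q -> G (app_tp m t)).

Section Post.
(* G : canonical graph, M : candidate mappings,
   adm tA tq : tq is an admissible rewriting of tA,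
   fresh m v : the fresh variable ?v^* for mapping m *)
Variables (G : tp -> Prop) (M : mapping -> Prop) (adm : tp -> tp -> Prop)
          (fresh : mapping -> V -> V).

Definition Tset (m : mapping) (tA tS : tp) : Prop :=
  In tS SG /\ exists tq, adm tA tq /\ G (app_tp m tq) /\
    models SD tS (app_tp m tq).

Definition obj_free_var (tS : tp) : Prop :=
  exists w, t3 tS = TV w /\ in_vars w SG /\ ~ SD w.

Definition discard_a (m : mapping) : Prop :=
  exists tA, In tA A /\ exists l,
    (t3 tA = TL l \/ exists v, t3 tA = TV v /\ m v = Some (TL l)) /\
    ~ (exists tS, Tset m tA tS /\ (t3 tS = TL l \/ obj_free_var tS)).

(* Delta^m, including the additions of step 2(b) *)
Definition deltaM (m : mapping) (v : V) : Prop :=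
  in_sp_vars v A \/ in_sp_vars v C \/
  (exists tA, In tA A /\ t3 tA = TV v /\ m v = Some (TU lam) /\
     ~ (exists tS, Tset m tA tS /\ obj_free_var tS)).

Definition discard_3 (m : mapping) : Prop :=
  exists v l, deltaM m v /\ m v = Some (TL l).

Definition kept (m : mapping) : Prop :=
  M m /\ ~ discard_a m /\ ~ discard_3 m.

Definition subst_term (m : mapping) (x y : term) : Prop :=
  (is_const x /\ y = x) \/
  (exists v, x = TV v /\ m v = Some (TU lam) /\ y = TV (fresh m v)) \/
  (exists v c, x = TV v /\ m v = Some c /\ c <> TU lam /\ y = c).
Definition subst_tp (m : mapping) (t t' : tp) : Prop :=
  subst_term m (t1 t) (t1 t') /\ subst_term m (t2 t) (t2 t') /\
  subst_term m (t3 t) (t3 t').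

Definition outG (t : tp) : Prop :=
  In t SG \/ exists m, kept m /\ exists tC, In tC C /\ subst_tp m tC t.

Definition in_vars_outG (v : V) : Prop :=
  exists t, outG t /\ occurs_in_tp (TV v) t.

Definition outD (v : V) : Prop :=
  SD v \/ (exists m, kept m /\ exists w, deltaM m w /\
             subst_term m (TV w) (TV v) /\ in_vars_outG v).

End Post.

(* freshness conditions on the choice of the variables ?v^* for the
   candidate mappings M: new for each mapping m of M (mappings taken
   extensionally), distinct for distinct variables, and not used in S^G, A
   or C *)
Definition fresh_ok (M : mapping -> Prop) (fresh : mapping -> V -> V) : Prop :=
  (forall m m' v, M m -> M m' -> (forall x, m x = m' x) ->
     fresh m v = fresh m' v) /\
  (forall m m' v w, M m -> M m' -> in_vars v A -> in_vars w A ->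
     fresh m v = fresh m' w -> (forall x, m x = m' x) /\ v = w) /\
  (forall m v, M m -> ~ in_vars (fresh m v) SG /\ ~ in_vars (fresh m v) A /\
               ~ in_vars (fresh m v) C).

Definition lam_fresh : Prop :=
  ~ in_consts (TU lam) SG /\ ~ in_consts (TU lam) A /\ ~ in_consts (TU lam) C.

Definition score_G (fresh : mapping -> V -> V) : tp -> Prop :=
  outG sandbox (evalQ sandbox) rewriting fresh.
Definition score_D (fresh : mapping -> V -> V) : V -> Prop :=
  outD sandbox (evalQ sandbox) rewriting fresh.

Definition fresh_ok_score fresh := fresh_ok (evalQ sandbox) fresh.
Definition fresh_ok_critical fresh :=
  fresh_ok (eval A critical_instance) fresh.

Definition critical_G (fresh : mapping -> V -> V) : tp -> Prop :=
  outG critical_instance (eval A critical_instance) (fun tA tq => tq = tA) fresh.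
Definition critical_D (fresh : mapping -> V -> V) : V -> Prop :=
  outD critical_instance (eval A critical_instance) (fun tA tq => tq = tA) fresh.

End Canonical.

End RDF.

(* Both constructions extend S^G with the patterns s^m(C) of the candidate
   mappings m they keep, and extend S^Delta accordingly.  The proof compares
   the kept mappings of the two constructions.
   - A mapping kept by critical(S,r) is kept by score(S,r): position by
     position, a match of A in the critical instance gives a match of some
     rewriting of A in the sandbox graph, and the sets T(tA) only grow, so the
     tests 2(a) and 3 only get weaker and Delta^m only shrinks.
   - A mapping m kept by score(S,r) is sent to its normalisation, which keeps
     the values of m lying in K and sends the other variables of A to lambda;
     the normalisation matches A in the critical instance and is kept by
     critical(S,r).
   A simulation lemma turns such a correspondence between kept mappings into
   an inclusion of instance sets: whatever a pattern s^m(C) models is modelled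
   by the corresponding pattern on the other side, and both output no-literal
   sets coincide with S^Delta on the variables of S^G. *)

From Pilot Require Import Defs.
From Stdlib Require Import List Classical ClassicalEpsilon FunctionalExtensionality.
Import ListNotations.

Section Triples.
Context {U L V : Type}.
Local Notation triple := (@tp U L V).
Local Notation mapping := (@Defs.mapping U L V).

Definition position (i : nat) : Prop := i = 1 \/ i = 2 \/ i = 3.

Lemma position_In (i : nat) : In i [1;2;3] <-> position i.
Proof. unfold position; simpl; intuition. Qed.

Lemma comp_app_tp (m : mapping) (t : triple) (i : nat) :
  comp (app_tp m t) i = app_term m (comp t i).
Proof. destruct i as [|[|[|]]]; reflexivity. Qed.

Lemma tp_ext (t t' : triple) :
  (forall i, position i -> comp t i = comp t' i) -> t = t'.
Proof.
  intro H. destruct t, t'.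
  pose proof (H 1 ltac:(unfold position; auto)).
  pose proof (H 2 ltac:(unfold position; auto)).
  pose proof (H 3 ltac:(unfold position; auto)).
  simpl in *. subst. reflexivity.
Qed.

Lemma occurs_iff_position (x : @term U L V) (t : triple) :
  occurs_in_tp x t <-> exists i, position i /\ comp t i = x.
Proof.
  unfold occurs_in_tp, position; split.
  - intros [H|[H|H]]; [exists 1|exists 2|exists 3]; auto.
  - intros [i [[-> | [-> | ->]] H]]; auto.
Qed.

Lemma models_by_positions (D : V -> Prop) (tS t : triple) :
  (forall i, position i -> is_const (comp tS i) -> comp t i = comp tS i) ->
  (forall i x, position i -> comp tS i = TV x ->
     is_const (comp t i) /\ (D x -> ~ is_lit (comp t i))) ->
  (forall i j x, position i -> position j -> comp tS i = TV x -> comp tS j = TV x ->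
     comp t i = comp t j) ->
  models D tS t.
Proof.
  intros Hconst Hvar Hcons.
  set (mu := fun x : V =>
    match excluded_middle_informative (exists i, position i /\ comp tS i = TV x) with
    | left e => let (i, _) := constructive_indefinite_description _ e in Some (comp t i)
    | right _ => None end).
  assert (Hmu_some : forall x c, mu x = Some c ->
            exists i, position i /\ comp tS i = TV x /\ c = comp t i).
  { intros x c Hx. unfold mu in Hx.
    destruct excluded_middle_informative as [e|n]; [|discriminate].
    destruct constructive_indefinite_description as [j [Hj Hjx]].
    injection Hx as <-. eauto. }
  assert (Hmu_at : forall i x, position i -> comp tS i = TV x -> mu x = Some (comp t i)).
  { intros i x Hi Hx. unfold mu. destruct excluded_middle_informative as [e|n].
    - destruct constructive_indefinite_description as [j [Hj Hjx]].
      f_equal. eapply Hcons; eauto.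
    - exfalso; apply n; eauto. }
  exists mu. split; [|split].
  - intros x c Hx. destruct (Hmu_some x c Hx) as [i [Hi [Hix ->]]].
    eapply Hvar; eauto.
  - apply tp_ext. intros i Hi. rewrite comp_app_tp.
    destruct (comp tS i) eqn:E; simpl.
    + symmetry. rewrite <- E. apply Hconst; auto. rewrite E. exact I.
    + symmetry. rewrite <- E. apply Hconst; auto. rewrite E. exact I.
    + rewrite (Hmu_at i v Hi E). reflexivity.
  - intros x c Hx HD. destruct (Hmu_some x c Hx) as [i [Hi [Hix ->]]].
    eapply Hvar; eauto.
Qed.

Lemma models_const_position (mu : mapping) (tS t : triple) (i : nat) :
  app_tp mu tS = t -> position i -> is_const (comp tS i) -> comp t i = comp tS i.
Proof.
  intros <- Hi Hc. rewrite comp_app_tp. destruct (comp tS i); simpl in *; tauto.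
Qed.

Lemma models_weaken (D D' : V -> Prop) (tS t : triple) :
  models D tS t -> (forall x, occurs_in_tp (TV x) tS -> D' x -> D x) ->
  (forall i, position i -> is_const (comp t i)) ->
  models D' tS t.
Proof.
  intros [mu [Hmu [Ht HD]]] Hsub Htriple.
  apply models_by_positions.
  - intros i Hi Hc. eapply models_const_position; eauto.
  - intros i x Hi Hx. split; auto. intro HD'.
    assert (Hocc : occurs_in_tp (TV x) tS) by (apply occurs_iff_position; eauto).
    subst t. rewrite comp_app_tp, Hx. simpl.
    destruct (mu x) eqn:E; [eapply HD; eauto|simpl; tauto].
  - intros i j x Hi Hj Hx Hy. subst t. rewrite !comp_app_tp, Hx, Hy. reflexivity.
Qed.

Lemma triple_const_position (t : triple) (i : nat) :
  wf_triple t -> position i -> is_const (comp t i).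
Proof.
  intros [H1 [H2 H3]] [-> | [-> | ->]]; simpl; auto.
  - destruct (t1 t); simpl in *; tauto.
  - destruct (t2 t); simpl in *; tauto.
Qed.

Definition lamify_tp (lam : U) (t : triple) : triple :=
  TP (lamify_term lam (t1 t)) (lamify_term lam (t2 t)) (lamify_term lam (t3 t)).

Lemma comp_lamify (lam : U) (t : triple) (i : nat) :
  comp (lamify_tp lam t) i = lamify_term lam (comp t i).
Proof. destruct i as [|[|[|]]]; reflexivity. Qed.

Lemma models_lamify (D : V -> Prop) (lam : U) (tS : triple) :
  models D tS (lamify_tp lam tS).
Proof.
  apply models_by_positions.
  - intros i Hi Hc. rewrite comp_lamify. destruct (comp tS i); simpl in *; tauto.
  - intros i x Hi Hx. rewrite comp_lamify, Hx. simpl. split; auto.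
  - intros i j x Hi Hj Hx Hy. rewrite !comp_lamify, Hx, Hy. reflexivity.
Qed.

End Triples.

Lemma Forall2_In_l {X Y : Type} (R : X -> Y -> Prop) (l1 : list X) (l2 : list Y) (x : X) :
  Forall2 R l1 l2 -> In x l1 -> exists y, In y l2 /\ R x y.
Proof.
  induction 1; simpl; [tauto|]. intros [<-|H1].
  - exists y; auto.
  - destruct (IHForall2 H1) as [z [? ?]]; exists z; auto.
Qed.

Lemma Forall2_choose {X Y : Type} (R : X -> Y -> Prop) (P : Y -> Prop) (l : list X) :
  (forall x, In x l -> exists y, R x y /\ P y) ->
  exists q, Forall2 R l q /\ forall y, In y q -> P y.
Proof.
  induction l as [|a l IH]; intros H.
  - exists []; split; [constructor|simpl; tauto].
  - destruct (H a (or_introl eq_refl)) as [y [Hy Py]].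
    destruct IH as [q [Hq Pq]]. { intros; apply H; simpl; auto. }
    exists (y :: q); split; [constructor; auto|]. simpl; intros z [<-|Hz]; auto.
Qed.

Section Substitution.
Context {U L V : Type}.
Local Notation triple := (@tp U L V).
Local Notation mapping := (@Defs.mapping U L V).
Variable lam : U.
Implicit Types (m : mapping) (fresh : mapping -> V -> V).

Lemma subst_term_functional fresh m (x y y' : term) :
  subst_term lam fresh m x y -> subst_term lam fresh m x y' -> y = y'.
Proof.
  unfold subst_term.
  intros [[Hc ->]|[[v [-> [Hm ->]]]|[v [c [-> [Hm [Hne ->]]]]]]].
  - intros [[Hc' ->]|[[v' [E _]]|[v' [c' [E _]]]]]; subst; simpl in *; tauto.
  - intros [[Hc' ->]|[[v' [E [Hm' ->]]]|[v' [c' [E [Hm' [Hne' ->]]]]]]];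
      [simpl in *; tauto| |]; injection E as <-; congruence.
  - intros [[Hc' ->]|[[v' [E [Hm' ->]]]|[v' [c' [E [Hm' [Hne' ->]]]]]]];
      [simpl in *; tauto| |]; injection E as <-; congruence.
Qed.

Definition subst_fn fresh m (x : term) : term :=
  match x with
  | TV v => match m v with
            | Some c =>
                if excluded_middle_informative (c = TU lam) then TV (fresh m v) else c
            | None => TV v end
  | _ => x end.

Definition subst_fn_tp fresh m (t : triple) : triple :=
  TP (subst_fn fresh m (t1 t)) (subst_fn fresh m (t2 t)) (subst_fn fresh m (t3 t)).

Lemma comp_subst_fn_tp fresh m (t : triple) (i : nat) :
  comp (subst_fn_tp fresh m t) i = subst_fn fresh m (comp t i).
Proof. destruct i as [|[|[|]]]; reflexivity. Qed.

Lemma subst_tp_positions fresh m (t t' : triple) :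
  subst_tp lam fresh m t t' <->
  forall i, position i -> subst_term lam fresh m (comp t i) (comp t' i).
Proof.
  unfold subst_tp, position. split.
  - intros [? [? ?]] i [-> | [-> | ->]]; auto.
  - intros H. repeat split; [apply (H 1)|apply (H 2)|apply (H 3)]; auto.
Qed.

Lemma subst_fn_spec fresh m (x : term) :
  (forall v, x = TV v -> m v <> None) -> subst_term lam fresh m x (subst_fn fresh m x).
Proof.
  intros Hdom. unfold subst_term. destruct x as [u|l|v]; simpl.
  - left; split; simpl; auto.
  - left; split; simpl; auto.
  - destruct (m v) as [c|] eqn:E; [|exfalso; eapply Hdom; eauto].
    destruct excluded_middle_informative as [e|n].
    + right; left. exists v. subst. auto.
    + right; right. exists v, c. auto.
Qed.

Lemma subst_fn_tp_spec fresh m (t : triple) :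
  (forall v, occurs_in_tp (TV v) t -> m v <> None) ->
  subst_tp lam fresh m t (subst_fn_tp fresh m t).
Proof.
  intros Hdom. apply subst_tp_positions. intros i Hi.
  rewrite comp_subst_fn_tp. apply subst_fn_spec.
  intros v Hv. apply Hdom, occurs_iff_position. eauto.
Qed.

Lemma subst_fn_var fresh m (v x : V) :
  is_mapping m -> m v <> None -> subst_fn fresh m (TV v) = TV x ->
  m v = Some (TU lam) /\ x = fresh m v.
Proof.
  intros Hm Hd. simpl. destruct (m v) as [c|] eqn:Em; [|congruence].
  destruct excluded_middle_informative as [e|n].
  - intro H; injection H as <-; subst; auto.
  - intro H; subst c. pose proof (Hm _ _ Em). simpl in *; tauto.
Qed.

Section Transfer.
Variables (fresh1 fresh2 : mapping -> V -> V) (m1 m2 : mapping)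
          (D1 D2 : V -> Prop).
Hypotheses (Hmap1 : is_mapping m1) (Hmap2 : is_mapping m2).

Lemma subst_agree_const (x y1 : term) :
  subst_term lam fresh1 m1 x y1 ->
  (forall v, x = TV v -> m2 v <> Some (TU lam) -> m1 v = m2 v) ->
  is_const (subst_fn fresh2 m2 x) -> y1 = subst_fn fresh2 m2 x.
Proof.
  intros Hs1 Hagree Hc. destruct x as [u|l|v].
  - eapply subst_term_functional; [exact Hs1|left; split; simpl; auto].
  - eapply subst_term_functional; [exact Hs1|left; split; simpl; auto].
  - simpl in Hc |- *. destruct (m2 v) as [c|] eqn:E; [|contradiction].
    destruct excluded_middle_informative as [e|n]; [contradiction|].
    assert (Hm1 : m1 v = Some c) by (rewrite Hagree; congruence).
    eapply subst_term_functional; [exact Hs1|right; right; exists v, c; auto].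
Qed.

Lemma subst_agree_var (x y1 : term) (y : V) (mu : mapping) :
  subst_term lam fresh1 m1 x y1 ->
  (forall v, x = TV v -> m2 v <> None) ->
  (forall v, x = TV v -> m2 v = Some (TU lam) -> D2 (fresh2 m2 v) ->
     (m1 v = Some (TU lam) /\ D1 (fresh1 m1 v)) \/
     (exists c, m1 v = Some c /\ c <> TU lam /\ ~ is_lit c)) ->
  (forall z c, mu z = Some c -> D1 z -> ~ is_lit c) ->
  subst_fn fresh2 m2 x = TV y -> D2 y -> ~ is_lit (app_term mu y1).
Proof.
  intros Hs1 Hdom Hlam1 Hmu Hx HD2.
  destruct x as [u|l|v]; simpl in Hx; try discriminate.
  destruct (subst_fn_var fresh2 m2 v y Hmap2 (Hdom v eq_refl) Hx) as [Hm2 ->].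
  destruct Hs1 as [[Hc _]|[[v' [Hv [Hm ->]]]|[v' [c' [Hv [Hm [Hne ->]]]]]]];
    [simpl in Hc; tauto| |]; injection Hv as <-;
    destruct (Hlam1 v eq_refl Hm2 HD2) as [[Hm1 HD1]|[c [Hm1 [Hnec Hnl]]]];
    try congruence.
  - simpl. destruct (mu (fresh1 m1 v)) as [c|] eqn:Emu; [eapply Hmu; eauto|simpl; tauto].
  - rewrite Hm1 in Hm. injection Hm as <-.
    pose proof (Hmap1 _ _ Hm1). destruct c; simpl in *; tauto.
Qed.

Lemma consequent_transfer (tC t1' t : triple) :
  subst_tp lam fresh1 m1 tC t1' -> models D1 t1' t -> wf_triple t ->
  (forall v, occurs_in_tp (TV v) tC -> m2 v <> None) ->
  (forall v, occurs_in_tp (TV v) tC -> m2 v <> Some (TU lam) -> m1 v = m2 v) ->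
  (forall v, occurs_in_tp (TV v) tC -> m2 v = Some (TU lam) -> D2 (fresh2 m2 v) ->
     (m1 v = Some (TU lam) /\ D1 (fresh1 m1 v)) \/
     (exists c, m1 v = Some c /\ c <> TU lam /\ ~ is_lit c)) ->
  (forall v w, occurs_in_tp (TV v) tC -> occurs_in_tp (TV w) tC ->
     fresh2 m2 v = fresh2 m2 w -> v = w) ->
  models D2 (subst_fn_tp fresh2 m2 tC) t.
Proof.
  intros Hs1 [mu [Hmu [<- HD1]]] Hwf Hdom Hagree Hlam1 Hinj.
  rewrite subst_tp_positions in Hs1.
  assert (Hocc : forall i v, position i -> comp tC i = TV v -> occurs_in_tp (TV v) tC).
  { intros i v Hi Hv. apply occurs_iff_position; eauto. }
  apply models_by_positions.
  - intros i Hi Hc. rewrite comp_subst_fn_tp in *. rewrite comp_app_tp.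
    rewrite (subst_agree_const (comp tC i) (comp t1' i)); auto.
    + destruct (subst_fn fresh2 m2 (comp tC i)); simpl in *; tauto.
    + intros v Hv. apply Hagree. eauto.
  - intros i y Hi Hy. split; [apply triple_const_position; auto|].
    rewrite comp_subst_fn_tp in Hy. rewrite comp_app_tp.
    apply (subst_agree_var (comp tC i) (comp t1' i) y mu); auto.
    + intros v Hv. apply Hdom. eauto.
    + intros v Hv. apply Hlam1. eauto.
  - intros i j y Hi Hj Hy Hy'. rewrite comp_subst_fn_tp in Hy, Hy'. rewrite !comp_app_tp.
    destruct (comp tC i) as [u|l|v] eqn:Ei; simpl in Hy; try discriminate.
    destruct (comp tC j) as [u'|l'|w] eqn:Ej; simpl in Hy'; try discriminate.
    destruct (subst_fn_var fresh2 m2 v y Hmap2 (Hdom v (Hocc i v Hi Ei)) Hy) as [_ Hv].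
    destruct (subst_fn_var fresh2 m2 w y Hmap2 (Hdom w (Hocc j w Hj Ej)) Hy') as [_ Hw].
    assert (v = w) as <- by (apply Hinj; eauto; congruence).
    f_equal. eapply subst_term_functional; [apply Hs1; auto|].
    rewrite Ei, <- Ej. apply Hs1; auto.
Qed.

End Transfer.
End Substitution.

Section Schema.
Context {U L V : Type}.
Local Notation triple := (@tp U L V).
Local Notation mapping := (@Defs.mapping U L V).
Variables (SG : list triple) (SD : V -> Prop) (A C : list triple) (lam : U).
Hypotheses (Hsch : wf_schema SG SD) (Hrule : wf_rule A C) (Hlam : lam_fresh SG A C lam).

Local Notation SB := (sandbox SG lam).
Local Notation CI := (critical_instance SG SD A lam).
Local Notation admS := (@rewriting U L V lam).
Local Notation admC := (fun tA tq : triple => tq = tA).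
Local Notation keptS := (kept SG SD A C lam SB (evalQ A lam SB) admS).
Local Notation keptC := (kept SG SD A C lam CI (eval A CI) admC).

Lemma const_in_consts (t : triple) (P : list triple) (i : nat) :
  In t P -> position i -> is_const (comp t i) -> in_consts (comp t i) P.
Proof.
  intros H Hi Hc. split; auto. exists t. split; auto. apply occurs_iff_position; eauto.
Qed.

Lemma var_in_vars (t : triple) (P : list triple) (i : nat) (v : V) :
  In t P -> position i -> comp t i = TV v -> in_vars v P.
Proof. intros H Hi Hv. exists t. split; auto. apply occurs_iff_position; eauto. Qed.

Lemma lam_not_const_SG (c : term) : in_consts c SG -> c <> TU lam.
Proof. intros H ->. exact (proj1 Hlam H). Qed.

Lemma varsC_A (v : V) : in_vars v C -> in_vars v A.
Proof. apply Hrule. Qed.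

Lemma SD_SG (v : V) : SD v -> in_vars v SG.
Proof. apply Hsch. Qed.

Lemma SG_linear (tS : triple) (i j : nat) (x : V) :
  In tS SG -> position i -> position j -> comp tS i = TV x -> comp tS j = TV x -> i = j.
Proof.
  intros Ht Hi Hj Hx Hy. destruct Hsch as [_ [Honce _]].
  apply (Honce x tS tS i j Ht Ht); auto; apply position_In; auto.
Qed.

Lemma deltaM_varsA (G : triple -> Prop) (adm : triple -> triple -> Prop) (m : mapping) (w : V) :
  deltaM SG SD A C lam G adm m w -> in_vars w A.
Proof.
  intros [[t [Ht Hw]]|[[t [Ht Hw]]|[tA [HA [H3 _]]]]].
  - exists t; split; auto. unfold occurs_in_tp; tauto.
  - apply varsC_A. exists t; split; auto. unfold occurs_in_tp; tauto.
  - exists tA; split; auto. unfold occurs_in_tp; auto.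
Qed.

Definition candidates (M : mapping -> Prop) : Prop :=
  forall m, M m -> is_mapping m /\ forall v, in_dom m v <-> in_vars v A.

Lemma candidates_in_dom (M : mapping -> Prop) (m : mapping) (v : V) :
  candidates M -> M m -> in_vars v A -> m v <> None.
Proof. intros HM Hm Hv. apply (HM m Hm), Hv. Qed.

Section Output.
Variables (G : triple -> Prop) (M : mapping -> Prop) (adm : triple -> triple -> Prop)
          (fresh : mapping -> V -> V).
Hypotheses (HM : candidates M) (Hfresh : fresh_ok SG A C M fresh).

(* On the variables of S^G the output no-literal set is S^Delta, since all other
   added variables are fresh. *)
Lemma outD_on_SG (x : V) : in_vars x SG -> outD SG SD A C lam G M adm fresh x -> SD x.
Proof.
  intros Hx [H|[m [[HMm _] [w [_ [Hs _]]]]]]; auto.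
  exfalso. destruct (HM m HMm) as [Hmap _].
  destruct Hs as [[Hc _]|[[v [Hv [_ E]]]|[v [c [Hv [Hm [_ E]]]]]]].
  - simpl in Hc; auto.
  - injection Hv as <-. injection E as ->. exact (proj1 (proj2 (proj2 Hfresh) m w HMm) Hx).
  - subst c. pose proof (Hmap _ _ Hm). simpl in *; auto.
Qed.

(* A fresh variable ?v^* belongs to the output no-literal set only if v is in
   Delta^m, since fresh variables determine their mapping and origin. *)
Lemma outD_fresh (m : mapping) (v : V) :
  M m -> in_vars v A -> outD SG SD A C lam G M adm fresh (fresh m v) ->
  deltaM SG SD A C lam G adm m v.
Proof.
  destruct Hfresh as [_ [Hinj Hnew]].
  intros HMm Hv [H|[m' [[HMm' _] [w [Hd [Hs _]]]]]].
  - exfalso. exact (proj1 (Hnew m v HMm) (SD_SG _ H)).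
  - destruct Hs as [[Hc _]|[[v' [Hv' [_ E]]]|[v' [c [Hv' [Hm [_ E]]]]]]].
    + simpl in Hc; tauto.
    + injection Hv' as <-. injection E as E.
      destruct (Hinj m' m w v HMm' HMm (deltaM_varsA _ _ _ _ Hd) Hv (eq_sym E))
        as [Hext <-].
      apply functional_extensionality in Hext. subst m'. exact Hd.
    + subst c. pose proof (proj1 (HM _ HMm') _ _ Hm). simpl in *; tauto.
Qed.

Lemma outD_of_delta (m : mapping) (tC tS : triple) (v : V) :
  kept SG SD A C lam G M adm m -> In tC C -> subst_tp lam fresh m tC tS ->
  occurs_in_tp (TV v) tC -> m v = Some (TU lam) -> deltaM SG SD A C lam G adm m v ->
  outD SG SD A C lam G M adm fresh (fresh m v).
Proof.
  intros Hk HC Hs Hocc Hm Hd. right. exists m. split; auto. exists v.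
  assert (Hsv : subst_term lam fresh m (TV v) (TV (fresh m v))).
  { right; left. exists v. auto. }
  repeat split; auto.
  exists tS. split; [right; exists m; split; auto; exists tC; auto|].
  apply occurs_iff_position. apply occurs_iff_position in Hocc.
  destruct Hocc as [i [Hi Hv]]. exists i. split; auto.
  pose proof (proj1 (subst_tp_positions _ _ _ _ _) Hs i Hi) as H.
  rewrite Hv in H. symmetry. eapply subst_term_functional; eauto.
Qed.

End Output.

Lemma instance_simulation (G1 G2 : triple -> Prop) (M1 M2 : mapping -> Prop)
  (adm1 adm2 : triple -> triple -> Prop) (fresh1 fresh2 : mapping -> V -> V)
  (F : mapping -> mapping) :
  candidates M1 -> candidates M2 ->
  fresh_ok SG A C M1 fresh1 -> fresh_ok SG A C M2 fresh2 ->
  (forall m, kept SG SD A C lam G1 M1 adm1 m -> kept SG SD A C lam G2 M2 adm2 (F m)) ->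
  (forall m v, kept SG SD A C lam G1 M1 adm1 m -> in_vars v A ->
     F m v <> Some (TU lam) -> m v = F m v) ->
  (forall m v, kept SG SD A C lam G1 M1 adm1 m -> in_vars v A ->
     F m v = Some (TU lam) -> deltaM SG SD A C lam G2 adm2 (F m) v ->
     (m v = Some (TU lam) /\ deltaM SG SD A C lam G1 adm1 m v) \/
     (exists c, m v = Some c /\ c <> TU lam /\ ~ is_lit c)) ->
  forall I, instance (outG SG SD A C lam G1 M1 adm1 fresh1)
                     (outD SG SD A C lam G1 M1 adm1 fresh1) I ->
            instance (outG SG SD A C lam G2 M2 adm2 fresh2)
                     (outD SG SD A C lam G2 M2 adm2 fresh2) I.
Proof.
  intros HM1 HM2 Hf1 Hf2 Hkept Hagree Hlam1 I [Hgraph HI].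
  split; auto. intros t Ht.
  assert (Hwf : wf_triple t) by (eapply Forall_forall; eauto).
  destruct (HI t Ht) as [tS [[HS|[m [Hk [tC [HC Hs]]]]] Hmod]].
  - exists tS. split; [left; auto|]. eapply models_weaken; eauto.
    + intros x Hx Hd. left. apply (outD_on_SG G2 M2 adm2 fresh2); auto.
      exists tS; auto.
    + intros i Hi. apply triple_const_position; auto.
  - assert (HvC : forall v, occurs_in_tp (TV v) tC -> in_vars v A).
    { intros v Ho. apply varsC_A. exists tC; auto. }
    assert (HM1m : M1 m) by apply Hk.
    assert (HM2m : M2 (F m)) by apply (Hkept m Hk).
    exists (subst_fn_tp lam fresh2 (F m) tC). split.
    + right. exists (F m). split; auto. exists tC. split; auto.
      apply subst_fn_tp_spec. intros v Hv. apply (candidates_in_dom M2); auto.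
    + apply (consequent_transfer lam fresh1 fresh2 m (F m)
               (outD SG SD A C lam G1 M1 adm1 fresh1) _
               (proj1 (HM1 m HM1m)) (proj1 (HM2 _ HM2m)) tC tS t Hs Hmod Hwf).
      * intros v Hv. apply (candidates_in_dom M2); auto.
      * intros v Hv Hne. apply Hagree; auto.
      * intros v Hv Hm HD.
        assert (Hd2 : deltaM SG SD A C lam G2 adm2 (F m) v)
          by (apply (outD_fresh G2 M2 adm2 fresh2); auto).
        destruct (Hlam1 m v Hk (HvC v Hv) Hm Hd2) as [[Hm1 Hd1]|Hc]; [left|right; exact Hc].
        split; auto. apply (outD_of_delta G1 M1 adm1 fresh1 m tC tS); auto.
      * intros v w Hv Hw E. apply (proj2 (proj1 (proj2 Hf2) _ _ v w HM2m HM2m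
                                           (HvC v Hv) (HvC w Hw) E)).
Qed.

Lemma rewriting_positions (t t' : triple) :
  rewriting lam t t' <-> forall i, position i -> rewrite_comp lam (comp t i) (comp t' i).
Proof.
  unfold rewriting, position. split.
  - intros [? [? ?]] i [-> | [-> | ->]]; auto.
  - intros H. repeat split; [apply (H 1)|apply (H 2)|apply (H 3)]; auto.
Qed.

Definition lam_at_vars_term (s a : @term U L V) : term :=
  match s with TV _ => TU lam | _ => a end.
Definition lam_at_vars (tS tA : triple) : triple :=
  TP (lam_at_vars_term (t1 tS) (t1 tA)) (lam_at_vars_term (t2 tS) (t2 tA))
     (lam_at_vars_term (t3 tS) (t3 tA)).

Lemma comp_lam_at_vars (tS tA : triple) (i : nat) :
  comp (lam_at_vars tS tA) i = lam_at_vars_term (comp tS i) (comp tA i).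
Proof. destruct i as [|[|[|]]]; reflexivity. Qed.

Lemma sandbox_match (m : mapping) (tS tA : triple) :
  In tS SG ->
  (forall i, position i -> is_const (comp tS i) -> app_term m (comp tA i) = comp tS i) ->
  exists tq, rewriting lam tA tq /\ SB (app_tp m tq) /\ models SD tS (app_tp m tq).
Proof.
  intros HS Hagree. exists (lam_at_vars tS tA).
  assert (E : app_tp m (lam_at_vars tS tA) = lamify_tp lam tS).
  { apply tp_ext. intros i Hi. rewrite comp_app_tp, comp_lam_at_vars, comp_lamify.
    destruct (comp tS i) eqn:E; simpl; auto;
      rewrite <- E; apply Hagree; auto; rewrite E; exact I. }
  rewrite E. split; [|split].
  - apply rewriting_positions. intros i Hi. rewrite comp_lam_at_vars.
    unfold rewrite_comp. destruct (comp tS i); simpl; auto.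
  - exists tS. split; auto.
  - apply models_lamify.
Qed.

Lemma critical_positions (t : triple) : CI t ->
  exists tS, In tS SG /\
    forall i, position i -> is_const (comp tS i) -> comp t i = comp tS i.
Proof.
  intros [tS [HS [H1 [H2 H3]]]]. exists tS. split; auto.
  assert (Hc : forall obj (x y : term), crit_comp SG SD A lam obj x y -> is_const x -> y = x).
  { intros obj x y [[_ ->]|[v [-> _]]]; simpl; tauto. }
  intros i [-> | [-> | ->]]; simpl; eapply Hc; eauto.
Qed.

Lemma eval_candidates (G : triple -> Prop) : candidates (eval A G).
Proof. intros m [Hm [Hdom _]]. auto. Qed.

Lemma evalQ_candidates (G : triple -> Prop) : candidates (evalQ A lam G).
Proof. intros m [Hm [Hdom _]]. auto. Qed.

Lemma critical_match_score (m : mapping) : eval A CI m -> evalQ A lam SB m.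
Proof.
  intros [Hmap [Hdom HA]]. split; auto. split; auto.
  apply Forall2_choose. intros tA HtA.
  destruct (critical_positions _ (HA tA HtA)) as [tS [HS Hc]].
  destruct (sandbox_match m tS tA HS) as [tq [Hr [Hsb _]]].
  - intros i Hi Hci. rewrite <- comp_app_tp. auto.
  - exists tq; auto.
Qed.

Lemma critical_Tset_score (m : mapping) (tA tS : triple) :
  Tset SG SD CI admC m tA tS -> Tset SG SD SB admS m tA tS.
Proof.
  intros [HS [tq [-> [_ [mu [_ [Happ _]]]]]]]. split; auto.
  destruct (sandbox_match m tS tA HS) as [tq [Hr [Hsb Hmod]]].
  - intros i Hi Hc. rewrite <- comp_app_tp. eapply models_const_position; eauto.
  - exists tq. auto.
Qed.

Lemma score_delta_critical (m : mapping) (v : V) :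
  deltaM SG SD A C lam SB admS m v -> deltaM SG SD A C lam CI admC m v.
Proof.
  intros [H|[H|[tA [HA [H3 [Hm Hn]]]]]]; [left; auto|right; left; auto|].
  right; right. exists tA. repeat split; auto.
  intros [tS [HT Hf]]. apply Hn. exists tS. split; auto. apply critical_Tset_score; auto.
Qed.

Lemma critical_kept_score (m : mapping) :
  kept SG SD A C lam CI (eval A CI) admC m -> kept SG SD A C lam SB (evalQ A lam SB) admS m.
Proof.
  intros [HM [Ha H3]]. split; [apply critical_match_score; auto|split].
  - intros [tA [HA [l [Hl Hn]]]]. apply Ha. exists tA. split; auto. exists l. split; auto.
    intros [tS [HT Hp]]. apply Hn. exists tS. split; auto. apply critical_Tset_score; auto.
  - intros [v [l [Hd Hm]]]. apply H3. exists v, l. split; auto.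
    apply score_delta_critical; auto.
Qed.

Definition normalise (m : mapping) : mapping := fun v =>
  if excluded_middle_informative (in_vars v A) then
    Some (match m v with
          | Some c => if excluded_middle_informative (inK SG A lam c) then c else TU lam
          | None => TU lam end)
  else None.

Lemma normalise_spec (m : mapping) (v : V) : is_mapping m -> in_vars v A ->
  exists c, normalise m v = Some c /\ is_const c /\ inK SG A lam c /\
            (c = TU lam \/ m v = Some c).
Proof.
  intros Hm Hv. unfold normalise.
  destruct excluded_middle_informative as [_|n]; [|contradiction].
  destruct (m v) as [c|] eqn:E.
  - destruct excluded_middle_informative as [k|k].
    + exists c. repeat split; auto. apply (Hm v c E).
    + exists (TU lam). repeat split; simpl; auto. left; auto.
  - exists (TU lam). repeat split; simpl; auto. left; auto.
Qed.

Lemma normalise_outside (m : mapping) (v : V) : ~ in_vars v A -> normalise m v = None.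
Proof. unfold normalise. destruct excluded_middle_informative; [contradiction|auto]. Qed.

Lemma normalise_keep (m : mapping) (v : V) (c : term) :
  in_vars v A -> m v = Some c -> inK SG A lam c -> normalise m v = Some c.
Proof.
  intros Hv E Hk. unfold normalise.
  destruct excluded_middle_informative as [_|n]; [|contradiction].
  rewrite E. destruct excluded_middle_informative; [auto|contradiction].
Qed.

Lemma normalise_not_lam (m : mapping) (v : V) (c : term) :
  normalise m v = Some c -> c <> TU lam -> m v = Some c.
Proof.
  unfold normalise. destruct excluded_middle_informative; [|discriminate].
  destruct (m v) as [c'|] eqn:E; [destruct excluded_middle_informative|];
    intros H Hne; inversion H; subst; auto; contradiction.
Qed.

Lemma normalise_lam (m : mapping) (v : V) : normalise m v = Some (TU lam) ->
  m v = None \/ m v = Some (TU lam) \/ exists c, m v = Some c /\ ~ inK SG A lam c.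
Proof.
  unfold normalise. destruct excluded_middle_informative; [|discriminate].
  destruct (m v) as [c|]; auto.
  destruct excluded_middle_informative; intros H; [injection H as E; subst; eauto|eauto].
Qed.

Lemma normalise_literal (m : mapping) (tA : triple) (l : L) :
  app_term (normalise m) (t3 tA) = TL l ->
  t3 tA = TL l \/ exists v, t3 tA = TV v /\ m v = Some (TL l).
Proof.
  destruct (t3 tA) as [u|l'|v]; simpl; try discriminate.
  - intros E; left; auto.
  - destruct (normalise m v) as [c|] eqn:E; intro H; try discriminate. subst c.
    right. exists v. split; auto. apply normalise_not_lam; auto. discriminate.
Qed.

Lemma critical_by_positions (t tS : triple) : In tS SG ->
  (forall i, position i -> crit_comp SG SD A lam (i = 3) (comp tS i) (comp t i)) -> CI t.
Proof.
  intros HS H. exists tS. split; auto.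
  assert (Hsubj : forall i x y, i <> 3 -> crit_comp SG SD A lam (i = 3) x y ->
                    crit_comp SG SD A lam False x y).
  { intros i x y Hne [Hc|[v [Hv [HK [Hu|[Hf _]]]]]].
    - left; auto.
    - right; exists v; auto.
    - contradiction. }
  assert (Hobj : forall x y, crit_comp SG SD A lam (3 = 3) x y ->
                   crit_comp SG SD A lam True x y).
  { intros x y [Hc|[v [Hv [HK Hu]]]]; [left; auto|right; exists v].
    destruct Hu as [Hu|[_ Hf]]; auto. }
  split; [|split].
  - apply (Hsubj 1); [discriminate|]. apply (H 1). unfold position; auto.
  - apply (Hsubj 2); [discriminate|]. apply (H 2). unfold position; auto.
  - apply Hobj. apply (H 3). unfold position; auto.
Qed.

Section Normalised.
Variable m : mapping.
Hypotheses (Hmap : is_mapping m) (Hsp : forall v l, in_sp_vars v A -> m v <> Some (TL l)).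

(* Where a rewriting of tA is sent by m to a constant of S^G, the normalised
   mapping sends tA itself to that constant (lambda is not a constant of S^G). *)
Lemma normalise_const_SG (tA tq : triple) (i : nat) (c : term) :
  In tA A -> position i -> rewrite_comp lam (comp tA i) (comp tq i) ->
  app_term m (comp tq i) = c -> in_consts c SG -> app_term (normalise m) (comp tA i) = c.
Proof.
  intros HA Hi [Hr|Hr] Happ Hc; rewrite Hr in Happ.
  - destruct (comp tA i) as [u|l|v] eqn:E; simpl in *; auto.
    destruct (m v) as [c'|] eqn:Em; [|subst c; destruct Hc as [[] _]].
    subst c'. rewrite (normalise_keep m v c); auto; [eapply var_in_vars; eauto|right; left; auto].
  - simpl in Happ. subst c. exfalso. eapply lam_not_const_SG; eauto.
Qed.

Lemma normalise_in_K (tA : triple) (i : nat) : In tA A -> position i ->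
  is_const (app_term (normalise m) (comp tA i)) /\
  inK SG A lam (app_term (normalise m) (comp tA i)).
Proof.
  intros HA Hi. destruct (comp tA i) as [u|l|v] eqn:E.
  1,2: simpl; split; [exact I|]; right; right; rewrite <- E;
       apply const_in_consts; auto; rewrite E; exact I.
  destruct (normalise_spec m v Hmap (var_in_vars _ _ _ _ HA Hi E)) as [c [Hc [Hcc [HK _]]]].
  simpl. rewrite Hc. auto.
Qed.

Lemma normalise_sp_uri (tA : triple) (i : nat) : In tA A -> (i = 1 \/ i = 2) ->
  is_uri (app_term (normalise m) (comp tA i)).
Proof.
  intros HA Hi.
  destruct (proj1 (Forall_forall _ _) (proj1 Hrule) tA HA) as [P1 P2].
  assert (Hpos : position i) by (destruct Hi as [-> | ->]; unfold position; auto).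
  destruct (comp tA i) as [u|l|v] eqn:E.
  - simpl; auto.
  - exfalso. destruct Hi as [-> | ->]; simpl in E; [rewrite E in P1|rewrite E in P2]; auto.
  - assert (Hsp_v : in_sp_vars v A)
      by (exists tA; split; auto; destruct Hi as [-> | ->]; simpl in E; auto).
    destruct (normalise_spec m v Hmap (var_in_vars tA A i v HA Hpos E))
      as [c [Hc [Hcc [HK [->|Hm]]]]]; simpl; rewrite Hc; simpl; auto.
    destruct c as [u|l|w]; simpl in *; auto. apply (Hsp v l); auto.
Qed.

Definition object_ok (tS tA : triple) : Prop :=
  is_const (t3 tS) \/ obj_free_var SG SD tS \/ ~ is_lit (app_term (normalise m) (t3 tA)).

Lemma normalise_var_position (tA tS : triple) (i : nat) (w : V) :
  In tA A -> position i -> comp tS i = TV w -> object_ok tS tA ->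
  let c := app_term (normalise m) (comp tA i) in
  is_const c /\ inK SG A lam c /\ (is_uri c \/ (i = 3 /\ ~ SD w)).
Proof.
  intros HA Hi Hw Hobj c. destruct (normalise_in_K tA i HA Hi) as [Hcc HK].
  split; auto. split; auto.
  destruct Hi as [-> | [-> | ->]]; [left; apply normalise_sp_uri; auto..|].
  simpl in Hw, c. destruct Hobj as [Hc|[[w' [E [_ Hn]]]|Hn]].
  - rewrite Hw in Hc; destruct Hc.
  - rewrite Hw in E. injection E as <-. right; auto.
  - left. subst c. simpl in Hcc. revert Hcc Hn.
    destruct (app_term (normalise m) (t3 tA)); simpl; tauto.
Qed.

Lemma normalise_critical (tA tS tq : triple) :
  In tA A -> In tS SG -> rewriting lam tA tq ->
  models SD tS (app_tp m tq) -> object_ok tS tA ->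
  CI (app_tp (normalise m) tA) /\ models SD tS (app_tp (normalise m) tA).
Proof.
  intros HA HS Hr [mu [Hmu [Happ HD]]] Hobj.
  rewrite rewriting_positions in Hr.
  assert (Hconst : forall i, position i -> is_const (comp tS i) ->
             comp (app_tp (normalise m) tA) i = comp tS i).
  { intros i Hi Hc. rewrite comp_app_tp. eapply normalise_const_SG; eauto.
    - rewrite <- comp_app_tp. eapply models_const_position; eauto.
    - apply const_in_consts; auto. }
  split.
  - apply (critical_by_positions _ tS HS). intros i Hi. unfold crit_comp.
    destruct (comp tS i) as [u|l|w] eqn:E.
    1,2: left; split; [exact I|]; rewrite <- E; apply Hconst; auto; rewrite E; exact I.
    right. exists w. rewrite comp_app_tp.
    destruct (normalise_var_position tA tS i w HA Hi E Hobj) as [_ [HK Hu]]. auto.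
  - apply models_by_positions; auto.
    + intros i x Hi Hx. rewrite comp_app_tp.
      destruct (normalise_var_position tA tS i x HA Hi Hx Hobj) as [Hcc [_ Hu]].
      split; auto. intros HSD Hl. destruct Hu as [Hu|[_ Hn]]; [|contradiction].
      revert Hu Hl. destruct (app_term (normalise m) (comp tA i)); simpl; auto.
    + intros i j x Hi Hj Hx Hy. assert (i = j) by (eapply SG_linear; eauto). subst; auto.
Qed.
End Normalised.

Lemma normalise_agree (m : mapping) (v : V) : is_mapping m -> in_vars v A ->
  normalise m v <> Some (TU lam) -> m v = normalise m v.
Proof.
  intros Hmap Hv Hne. destruct (normalise_spec m v Hmap Hv) as [c [Hc _]].
  rewrite Hc in *. apply normalise_not_lam; auto. congruence.
Qed.

Lemma score_kept_facts (m : mapping) : keptS m ->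
  is_mapping m /\ (forall v, in_vars v A -> m v <> None) /\
  (forall v l, in_sp_vars v A -> m v <> Some (TL l)).
Proof.
  intros [[Hmap [Hdom _]] [_ H3]]. split; auto. split.
  - intros v Hv. apply Hdom; auto.
  - intros v l Hv E. apply H3. exists v, l. split; auto. left; auto.
Qed.

Lemma score_Tset_critical (m : mapping) (tA tS : triple) : keptS m -> In tA A ->
  Tset SG SD SB admS m tA tS -> object_ok m tS tA -> Tset SG SD CI admC (normalise m) tA tS.
Proof.
  intros Hk HA [HS [tq [Hr [_ Hmod]]]] Hobj.
  destruct (score_kept_facts m Hk) as [Hmap [_ Hsp]].
  destruct (normalise_critical m Hmap Hsp tA tS tq HA HS Hr Hmod Hobj) as [HCI HM].
  split; auto. exists tA. auto.
Qed.

Lemma literal_witness (m : mapping) (tA : triple) (l : L) : keptS m -> In tA A ->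
  (t3 tA = TL l \/ exists v, t3 tA = TV v /\ m v = Some (TL l)) ->
  exists tS, Tset SG SD SB admS m tA tS /\ (t3 tS = TL l \/ obj_free_var SG SD tS).
Proof.
  intros [_ [Ha _]] HA Hl. apply NNPP. intro Hn. apply Ha. exists tA. split; auto.
  exists l. split; auto.
Qed.

Lemma witness_object_ok (m : mapping) (tS tA : triple) (l : L) :
  t3 tS = TL l \/ obj_free_var SG SD tS -> object_ok m tS tA.
Proof. intros [Hp|Hp]; [left; rewrite Hp; exact I|right; left; auto]. Qed.

Lemma score_match_critical (m : mapping) : keptS m -> eval A CI (normalise m).
Proof.
  intros Hk. destruct (score_kept_facts m Hk) as [Hmap [Hdom Hsp]].
  pose proof Hk as [[_ [_ [q [Hq Hqs]]]] _].
  split; [|split].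
  - intros v c Hc. destruct (classic (in_vars v A)) as [Hv|Hv].
    + destruct (normalise_spec m v Hmap Hv) as [c' [E [Hcc _]]]. congruence.
    + rewrite normalise_outside in Hc; [discriminate|auto].
  - intros v. unfold in_dom. split.
    + intros H. apply NNPP. intro Hv. apply H, normalise_outside, Hv.
    + intros Hv. destruct (normalise_spec m v Hmap Hv) as [c' [E _]]. congruence.
  - intros tA HA. destruct (Forall2_In_l _ _ _ _ Hq HA) as [tq [Htq Hr]].
    destruct (Hqs tq Htq) as [tS0 [HS0 E0]].
    assert (Hmod0 : models SD tS0 (app_tp m tq)) by (rewrite E0; apply models_lamify).
    destruct (classic (object_ok m tS0 tA)) as [Hc|Hc].
    + apply (normalise_critical m Hmap Hsp tA tS0 tq); auto.
    + assert (Hlit : exists l, app_term (normalise m) (t3 tA) = TL l).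
      { destruct (app_term (normalise m) (t3 tA)) as [u|l|v] eqn:E; eauto;
          exfalso; apply Hc; right; right; rewrite E; simpl; auto. }
      destruct Hlit as [l Hl].
      destruct (literal_witness m tA l Hk HA (normalise_literal m tA l Hl))
        as [tS [[HS [tq' [Hr' [_ Hmod]]]] Hp]].
      apply (normalise_critical m Hmap Hsp tA tS tq'); auto.
      eapply witness_object_ok; eauto.
Qed.

Lemma score_kept_critical (m : mapping) : keptS m -> keptC (normalise m).
Proof.
  intros Hk. split; [apply score_match_critical; auto|split].
  - intros [tA [HA [l [Hl Hn]]]].
    assert (Hl' : t3 tA = TL l \/ exists v, t3 tA = TV v /\ m v = Some (TL l)).
    { destruct Hl as [Hl|[v [Hv Hm]]]; [left; auto|right; exists v; split; auto].
      apply normalise_not_lam; auto; discriminate. }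
    destruct (literal_witness m tA l Hk HA Hl') as [tS [HT Hp]].
    apply Hn. exists tS. split; auto. apply score_Tset_critical; auto.
    eapply witness_object_ok; eauto.
  - intros [v [l [Hd Hm]]]. destruct Hk as [_ [_ H3]]. apply H3. exists v, l.
    assert (Hm' : m v = Some (TL l)) by (apply normalise_not_lam; auto; discriminate).
    split; auto.
    destruct Hd as [Hd|[Hd|[tA [_ [_ [Hlm _]]]]]]; [left; auto|right; left; auto|congruence].
Qed.

Lemma normalise_delta (m : mapping) (v : V) : keptS m -> in_vars v A ->
  normalise m v = Some (TU lam) -> deltaM SG SD A C lam CI admC (normalise m) v ->
  (m v = Some (TU lam) /\ deltaM SG SD A C lam SB admS m v) \/
  (exists c, m v = Some c /\ c <> TU lam /\ ~ is_lit c).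
Proof.
  intros Hk Hv Hnorm Hd. destruct (score_kept_facts m Hk) as [Hmap [Hdom Hsp]].
  destruct (normalise_lam m v Hnorm) as [Hn|[Hl|[c [Hc HK]]]].
  - exfalso; eapply Hdom; eauto.
  - left. split; auto.
    destruct Hd as [Hd|[Hd|[tA [HA [H3 [_ Hn]]]]]]; [left; auto|right; left; auto|].
    right; right. exists tA. repeat split; auto.
    intros [tS [HT Hf]]. apply Hn. exists tS. split; auto.
    apply score_Tset_critical; auto. right; left; auto.
  - right. exists c. split; auto. split; [intro E; subst; apply HK; left; auto|].
    intro Hlit. destruct c as [u|l|w]; simpl in Hlit; try contradiction.
    pose proof Hk as [_ [_ H3]].
    destruct Hd as [Hd|[Hd|[tA [HA [Ht3 [_ Hn]]]]]].
    + apply H3. exists v, l. split; auto. left; auto.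
    + apply H3. exists v, l. split; auto. right; left; auto.
    + destruct (literal_witness m tA l Hk HA (or_intror (ex_intro _ v (conj Ht3 Hc))))
        as [tS [HT [Hp|Hp]]].
      * apply HK. right; left. rewrite <- Hp. destruct HT as [HS _].
        apply (const_in_consts tS SG 3); auto; [unfold position; auto|simpl; rewrite Hp; exact I].
      * apply Hn. exists tS. split; auto. apply score_Tset_critical; auto. right; left; auto.
Qed.

End Schema.

Theorem theorem1 (U L V : Type) (SG : list (@tp U L V)) (SD : V -> Prop)
  (A C : list (@tp U L V)) (lam : U)
  (fresh_s fresh_c : @mapping U L V -> V -> V) :
  wf_schema SG SD ->
  wf_rule A C ->
  lam_fresh SG A C lam ->
  fresh_ok_score SG A C lam fresh_s ->
  fresh_ok_critical SG SD A C lam fresh_c ->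
  forall I : list (@tp U L V),
    instance (score_G SG SD A C lam fresh_s) (score_D SG SD A C lam fresh_s) I <->
    instance (critical_G SG SD A C lam fresh_c) (critical_D SG SD A C lam fresh_c) I.
Proof.
  intros Hsch Hrule Hlam Hfs Hfc I. split.
  -
    apply (instance_simulation SG SD A C lam Hsch Hrule _ _ _ _ _ _ _ _ (normalise SG A lam)
             (evalQ_candidates A lam _) (eval_candidates A _) Hfs Hfc).
    + apply score_kept_critical; auto.
    + intros m v Hk Hv. apply normalise_agree; auto. exact (proj1 (proj1 Hk)).
    + intros m v Hk Hv. apply normalise_delta; auto.
  -
    apply (instance_simulation SG SD A C lam Hsch Hrule _ _ _ _ _ _ _ _ (fun m => m)
             (eval_candidates A _) (evalQ_candidates A lam _) Hfc Hfs).
    + apply critical_kept_score.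
    + intros m v _ _ _. reflexivity.
    + intros m v _ _ Hm Hd. left. split; auto. apply score_delta_critical; auto.
Qed.
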